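(* Under the mixed membership model with Conditions (C1) and (C2), $\max_{1\le k\le K}\|\mathbf v_k\|_\infty=O(n^{-1/2})$. The same conclusion holds under the degree-corrected mixed membership model with Conditions (C1) and (C4).
   Context: $n$ nodes, $K$ fixed; $\mathbf X$ symmetric binary adjacency matrix (independent Bernoulli entries on/above the diagonal, possibly with zeroed diagonal) with mean structure $\mathbf H$, $\mathbf W=\mathbf X-\mathbf H$, $\alpha_n=\{\max_m\sum_l\mathrm{var}(w_{lm})\}^{1/2}$. DCMM model: $\mathbf H=\boldsymbol\Theta\boldsymbol\Pi\mathbf P\boldsymbol\Pi^T\boldsymbol\Theta$, $\boldsymbol\Theta=\mathrm{diag}(\theta_1,\dots,\theta_n)$, $\theta_l>0$, $\theta_{\max},\theta_{\min}$ max/min; rows $\boldsymbol\pi_l$ of $\boldsymbol\Pi\in\mathbb R^{n\times K}$ probability vectors; $\mathbf P\in[0,1]^{K\times K}$ nonsingular; $\operatorname{rank}\mathbf H=K$. Mixed membership model: $\boldsymbol\Theta=\sqrt\theta\mathbf I_n$, i.e. $\mathbf H=\theta\boldsymbol\Pi\mathbf P\boldsymbol\Pi^T$. $\mathcal N_k=\{l:\boldsymbol\pi_l(k)=1\}$. $\mathbf H=\mathbf V\mathbf D\mathbf V^T$ with $\mathbf D=\mathrm{diag}(d_1,\dots,d_K)$, $|d_1|\ge\dots\ge|d_K|>0$, $\mathbf V=(\mathbf v_1,\dots,\mathbf v_K)$ orthonormal. (C1): constant $c_0>0$, $\min\{|d_a|/|d_b|:a<b,\ d_a\ne-d_b\}\ge1+c_0$,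 $\alpha_n\to\infty$. (C2): constants $0<c_0,c_1<1$: $\lambda_K(\boldsymbol\Pi^T\boldsymbol\Pi)\ge c_0n$, $\lambda_K(\mathbf P)\ge c_0$, $\theta\ge n^{-c_1}$. (C4): constants $c_2,c_3\in(0,1)$, $c_4>0$: $\min_k|\mathcal N_k|\ge c_2n$, $\theta_{\max}\le c_4\theta_{\min}$, $\theta_{\min}^2\ge n^{-c_3}$. *)

From mathcomp Require Import all_boot all_order all_algebra.
From mathcomp Require Import all_classical all_reals all_analysis.
Set Implicit Arguments. Unset Strict Implicit. Unset Printing Implicit Defensive.
Import Order.TTheory GRing.Theory Num.Theory.
Import numFieldNormedType.Exports.
Local Open Scope classical_set_scope.
Local Open Scope ring_scope.

Section Defs.
Variable R : realType.

Definition prob_rows (n K : nat) (Pi : 'M[R]_(n, K)) : Prop :=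
  forall l : 'I_n, (forall k, 0 <= Pi l k) /\ \sum_(k < K) Pi l k = 1.

Definition entries01 (m n : nat) (A : 'M[R]_(m, n)) : Prop :=
  forall i j, 0 <= A i j <= 1.

Definition dcmm_mean (n K : nat) (theta : 'rV[R]_n) (Pi : 'M[R]_(n, K))
  (P : 'M[R]_K) : 'M[R]_n :=
  diag_mx theta *m Pi *m P *m Pi^T *m diag_mx theta.

Definition mm_mean (n K : nat) (theta : R) (Pi : 'M[R]_(n, K))
  (P : 'M[R]_K) : 'M[R]_n :=
  theta *: (Pi *m P *m Pi^T).

Definition mean_ok (n K : nat) (H : 'M[R]_n) (P : 'M[R]_K) : Prop :=
  [/\ entries01 P, P \in unitmx, entries01 H & \rank H = K].

Definition eig_decomp (n K : nat) (H : 'M[R]_n) (V : 'M[R]_(n, K))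
  (d : 'rV[R]_K) : Prop :=
  [/\ H = V *m diag_mx d *m V^T,
      V^T *m V = 1%:M,
      (forall a b : 'I_K, (a <= b)%N -> `|d 0 b| <= `|d 0 a|) &
      (forall a : 'I_K, 0 < `|d 0 a|)].

(* var(w_lm) for X_lm ~ Bernoulli(h_lm) independent (l <= m), symmetric;
   if the diagonal is zeroed (zdiag = true), X_ll = 0 and var(w_ll) = 0 *)
Definition var_w (n : nat) (H : 'M[R]_n) (zdiag : bool) (l m : 'I_n) : R :=
  if zdiag && (l == m) then 0 else H l m * (1 - H l m).

Definition alpha (n : nat) (H : 'M[R]_n) (zdiag : bool) : R :=
  Num.sqrt (\big[Num.max/0]_(m < n) \sum_(l < n) var_w H zdiag l m).

(* lambda_K(A) >= c for a symmetric K x K matrix A: its smallest eigenvalue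
   (all eigenvalues being real) is at least c *)
Definition lambdaK_ge (K : nat) (A : 'M[R]_K) (c : R) : Prop :=
  forall a : R, eigenvalue A a -> c <= a.

Definition cond_C1 (K : nat) (c0 : R) (n0 : nat) (d : forall n : nat, 'rV[R]_K)
  (alpha_seq : nat -> R) : Prop :=
  [/\ 0 < c0,
      (forall n, (n0 <= n)%N -> forall a b : 'I_K, (a < b)%N ->
         d n 0 a != - d n 0 b -> 1 + c0 <= `|d n 0 a| / `|d n 0 b|) &
      alpha_seq @ \oo --> +oo].

Definition pure_nodes (n K : nat) (Pi : 'M[R]_(n, K)) (k : 'I_K) : {set 'I_n} :=
  [set l | Pi l k == 1].

End Defs.

(* Since V^T V = I, we have V = H V D^-1; writing H = X Y with X = Pi in the
   mixed membership model and X = Theta Pi in the DCMM model, every column of V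
   is of the form X b.  In the first model |Pi b| = 1 and
   lambda_K(Pi^T Pi) >= c n give |b_j| <= (c n)^(-1/2).  In the second, the
   column equals theta_l b_j on the at least c2 n pure nodes l of community j,
   and theta_i <= c4 theta_l then gives theta_i |b_j| <= c4 (c2 n)^(-1/2).  An
   entry of V is a convex combination, with weights pi_i, of such quantities.
   Since lambda_K is specified through eigenvalues, the first model also needs
   the Rayleigh bound c |x|^2 <= x A x^T for a real symmetric A with all
   eigenvalues >= c: the infimum m of the Rayleigh quotient is an eigenvalue,
   for otherwise A - m I would be invertible and positive semidefinite, hence
   coercive, contradicting the choice of m. *)

From mathcomp Require Import all_boot all_order all_algebra.
From mathcomp Require Import all_classical all_reals all_analysis.
From mathcomp Require Import ring lra.
Import Order.TTheory GRing.Theory Num.Theory.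
Set Implicit Arguments. Unset Strict Implicit.
Local Open Scope ring_scope.

Local Notation "''[' u , v ]_ A" := (form idfun A u v) (format "''[' u ,  v ]_ A").
Local Notation "''[' u ]" := (form idfun 1%:M u u).

Lemma sqr_le_mul_of_quad_ge0 (R : realFieldType) (a b c : R) : 0 <= a ->
  (forall t, 0 <= c + 2 * b * t + a * t ^+ 2) -> b ^+ 2 <= a * c.
Proof.
move=> a_ge0 quad_ge0; have [a_gt0|a_le0] := ltrP 0 a.
  have := quad_ge0 (- b / a).
  have -> : c + 2 * b * (- b / a) + a * (- b / a) ^+ 2 = (a * c - b ^+ 2) / a.
    by field; rewrite gt_eqF.
  by rewrite pmulr_lge0 ?invr_gt0 // subr_ge0.
have a0 : a = 0 by apply/eqP; rewrite eq_le a_le0 a_ge0.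
rewrite a0 in quad_ge0 *.
have [-> //|b_neq0] := eqVneq b 0; first by rewrite expr0n mul0r.
have := quad_ge0 (- (c + 1) / (2 * b)).
have -> : c + 2 * b * (- (c + 1) / (2 * b)) + 0 * (- (c + 1) / (2 * b)) ^+ 2 = -1.
  by field; rewrite b_neq0.
by rewrite ler0N1.
Qed.

Section RealForms.
Variables (R : realFieldType) (K : nat).
Implicit Types (A N : 'M[R]_K) (u v z : 'rV[R]_K).

Lemma form_idfunE A u v : '[u, v]_A = (u *m A *m v^T) 0 0.
Proof. by rewrite /form map_mx_id. Qed.

Lemma formE A u v : '[u, v]_A = \sum_i \sum_j u 0 i * A i j * v 0 j.
Proof.
rewrite form_idfunE mxE exchange_big /=; apply: eq_bigr => j _.
by rewrite mxE mulr_suml; apply: eq_bigr => i _; rewrite !mxE.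
Qed.

Lemma form_sym A u v : A^T = A -> '[u, v]_A = '[v, u]_A.
Proof.
move=> sA; rewrite !form_idfunE.
transitivity ((v *m A *m u^T)^T 0 0); first by rewrite !trmx_mul trmxK sA mulmxA.
by rewrite mxE.
Qed.

Lemma form_er A u j : '[u, 'e_j]_A = (u *m A) 0 j.
Proof. by rewrite form_idfunE trmx_delta -colE mxE. Qed.

Lemma form_subr_scalar A m u : '[u, u]_(A - m%:M) = '[u, u]_A - m * '[u].
Proof.
by rewrite !form_idfunE mulmxBr mulmxBl mul_mx_scalar mulmx1 -scalemxAl !mxE.
Qed.

Lemma form1E u : '[u] = \sum_j u 0 j ^+ 2.
Proof. by rewrite form_idfunE mulmx1 mxE; apply: eq_bigr => j _; rewrite mxE expr2. Qed.

Lemma form1_ge0 u : 0 <= '[u].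
Proof. by rewrite form1E; apply: sumr_ge0 => j _; exact: sqr_ge0. Qed.

Lemma coord_sqr_le_form1 u j : u 0 j ^+ 2 <= '[u].
Proof. by rewrite form1E (bigD1 j) //= lerDl sumr_ge0 // => i _; exact: sqr_ge0. Qed.

Lemma form1_gt0 u : u != 0 -> 0 < '[u].
Proof.
move=> u_neq0; rewrite lt_def form1_ge0 andbT; apply: contraNneq u_neq0 => u0.
apply/eqP/rowP => j; rewrite mxE; apply/eqP; rewrite -sqrf_eq0 eq_le sqr_ge0 andbT.
by rewrite -u0 coord_sqr_le_form1.
Qed.

Lemma norm_form_le A u :
  `|'[u, u]_A| <= (\sum_i \sum_j `|A i j|) * '[u].
Proof.
rewrite formE mulr_suml; apply: le_trans (ler_norm_sum _ _ _) _.
apply: ler_sum => i _; rewrite mulr_suml; apply: le_trans (ler_norm_sum _ _ _) _.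
apply: ler_sum => j _; rewrite !normrM mulrAC mulrC ler_wpM2l //.
rewrite -ler_sqr ?nnegrE ?mulr_ge0 ?form1_ge0 // exprMn !real_normK ?num_real //.
by rewrite expr2 ler_pM ?sqr_ge0 ?coord_sqr_le_form1.
Qed.

Lemma psd_form_CauchySchwarz N u v : N^T = N -> (forall z, 0 <= '[z, z]_N) ->
  '[u, v]_N ^+ 2 <= '[u, u]_N * '[v, v]_N.
Proof.
move=> sN N_psd; rewrite mulrC; apply: sqr_le_mul_of_quad_ge0 => // t.
have := N_psd (u + t *: v).
rewrite !(formDl, formDr, formZl, formZr) /= (form_sym _ v sN).
by congr (0 <= _); ring.
Qed.

Lemma psd_unitmx_form_coercive N : N^T = N -> (forall z, 0 <= '[z, z]_N) ->
  N \in unitmx -> exists2 C, 0 <= C & forall z, '[z] <= C * '[z, z]_N.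
Proof.
(* z = (z N) N^-1, and each coordinate of z N is bounded by Cauchy-Schwarz. *)
move=> sN N_psd N_unit; pose G := invmx N *m (invmx N)^T.
have N_diag j : N j j = '['e_j, 'e_j]_N by rewrite formee.
have trN_ge0 : 0 <= \tr N by apply: sumr_ge0 => j _; rewrite N_diag.
have G_ge0 : 0 <= \sum_i \sum_j `|G i j| by apply: sumr_ge0 => i _; exact: sumr_ge0.
exists ((\sum_i \sum_j `|G i j|) * \tr N) => [|z]; first exact: mulr_ge0.
pose y := z *m N.
have -> : '[z] = '[y, y]_G.
  by rewrite !form_idfunE mulmx1 /y /G !mulmxA mulmxK // -!mulmxA -trmx_mul mulmxK.
apply: le_trans (ler_norm _) _; apply: le_trans (norm_form_le G y) _.
rewrite -mulrA ler_wpM2l // form1E /mxtrace mulr_suml.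
apply: ler_sum => j _; rewrite N_diag mulrC /y -form_er.
exact: psd_form_CauchySchwarz.
Qed.

Lemma eigenvalue_form_inf A m : A^T = A -> (forall z, m * '[z] <= '[z, z]_A) ->
  (forall e, 0 < e -> exists2 z, z != 0 & '[z, z]_A < (m + e) * '[z]) ->
  eigenvalue A m.
Proof.
move=> sA m_lb m_inf; rewrite /eigenvalue /eigenspace kermx_eq0 row_free_unit.
apply/negP => N_unit; pose N := A - m%:M.
have sN : N^T = N by rewrite linearB /= tr_scalar_mx sA.
have N_psd z : 0 <= '[z, z]_N by rewrite form_subr_scalar subr_ge0.
have [C C_ge0 N_coercive] := psd_unitmx_form_coercive sN N_psd N_unit.
have [|z z_neq0] := m_inf (C + 1)^-1; first by rewrite invr_gt0; lra.
have z_gt0 := form1_gt0 z_neq0; have := N_coercive z; have := N_psd z.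
rewrite !form_subr_scalar; set a := '[z, z]_A; set n := '[z] => gap_ge0 le_n lt_a.
have : (a - m * n) * (C + 1) < n.
  by rewrite -ltr_pdivlMr ?ltr_wpDl //; lra.
nra.
Qed.

End RealForms.

Section RayleighInf.
Variables (R : realType) (K : nat).
Implicit Types (A : 'M[R]_K) (x z : 'rV[R]_K).

Lemma lambdaK_ge_form A c : A^T = A -> lambdaK_ge A c -> forall x, c * '[x] <= '[x, x]_A.
Proof.
move=> sA A_ge x; have [->|x_neq0] := eqVneq x 0; first by rewrite !form0l mulr0.
pose S := [set '[z, z]_A / '[z] | z in [set z : 'rV[R]_K | z != 0]]%classic.
have S_inf : has_inf S.
  split; first by exists ('[x, x]_A / '[x]), x.
  exists (- \sum_i \sum_j `|A i j|) => _ [z /= z_neq0 <-].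
  rewrite ler_pdivlMr ?form1_gt0 // mulNr.
  by have := norm_form_le A z; rewrite ler_norml => /andP[].
have m_lb z : inf S * '[z] <= '[z, z]_A.
  have [->|z_neq0] := eqVneq z 0; first by rewrite !form0l mulr0.
  by rewrite -ler_pdivlMr ?form1_gt0 //; apply: (ge_inf S_inf.2); exists z.
apply: le_trans (m_lb x); rewrite ler_wpM2r ?form1_ge0 // A_ge //.
apply: eigenvalue_form_inf => // e e_gt0.
have [_ [z z_neq0 <-]] := inf_adherent e_gt0 S_inf.
by exists z; rewrite // -ltr_pdivrMr ?form1_gt0.
Qed.

End RayleighInf.

Lemma abs_le_div_sqrt (R : rcfType) (x c s : R) : 0 < s -> 0 <= c ->
  s * x ^+ 2 <= c ^+ 2 -> `|x| <= c / Num.sqrt s.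
Proof.
move=> s_gt0 c_ge0 le_sx; rewrite -sqrtr_sqr -[c]ger0_norm // -sqrtr_sqr.
have s_ge0 := ltW s_gt0.
rewrite -sqrtrV // -sqrtrM ?sqr_ge0 // ler_sqrt ?mulr_ge0 ?sqr_ge0 ?invr_ge0 //.
by rewrite ler_pdivlMr // mulrC.
Qed.

Lemma div_sqrtM (R : rcfType) (a b c : R) : 0 <= a ->
  c / Num.sqrt (a * b) = c / Num.sqrt a / Num.sqrt b.
Proof. by move=> a_ge0; rewrite sqrtrM // invfM mulrA. Qed.

Section ConvexCombinations.
Variables (R : numDomainType) (K : nat) (p : 'I_K -> R).
Hypotheses (p_ge0 : forall j, 0 <= p j) (p_sum1 : \sum_j p j = 1).

Lemma norm_convex_comb_le (f : 'I_K -> R) s : (forall j, `|f j| <= s) ->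
  `|\sum_j p j * f j| <= s.
Proof.
move=> f_le; apply: le_trans (ler_norm_sum _ _ _) _.
rewrite -[s]mul1r -p_sum1 mulr_suml; apply: ler_sum => j _.
by rewrite normrM ger0_norm // ler_wpM2l.
Qed.

Lemma convex_comb_vertex (f : 'I_K -> R) j : p j = 1 -> \sum_j p j * f j = f j.
Proof.
move=> pj1; have rest_sum0 : \sum_(i | i != j) p i = 0.
  by apply: (addrI 1); rewrite addr0 -{1}pj1 -(bigD1 j (P := xpredT)).
have rest0 := psumr_eq0P (fun i _ => p_ge0 i) rest_sum0.
by rewrite (bigD1 j) //= pj1 mul1r big1 ?addr0 // => i /rest0 ->; rewrite mul0r.
Qed.

End ConvexCombinations.

Section EigenvectorEntries.
Variable R : realType.

Lemma eig_decomp_mulmx n K (H : 'M[R]_n) (V : 'M[R]_(n, K)) d :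
  eig_decomp H V d -> H *m V = V *m diag_mx d.
Proof. by case=> -> VV _ _; rewrite -!mulmxA VV mulmx1. Qed.

Lemma eig_decomp_col_factor n K K' (H : 'M[R]_n) (V : 'M[R]_(n, K)) d
    (X : 'M[R]_(n, K')) Y k :
  eig_decomp H V d -> H = X *m Y -> exists b : 'cV[R]_K', col k V = X *m b.
Proof.
move=> eig HXY; exists (col k (Y *m V *m diag_mx (\row_j (d 0 j)^-1))).
have d_neq0 j : d 0 j != 0 by case: eig => _ _ _ /(_ j); rewrite normr_gt0.
rewrite !colE !mulmxA -HXY (eig_decomp_mulmx eig); congr (_ *m _).
by apply/matrixP => i j; rewrite !mul_mx_diag !mxE mulfK.
Qed.

Lemma eig_decomp_col_norm n K (H : 'M[R]_n) (V : 'M[R]_(n, K)) d k :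
  eig_decomp H V d -> '[(col k V)^T] = 1.
Proof.
case=> _ VV _ _; have := congr1 (fun M : 'M[R]_K => M k k) VV.
rewrite /= !mxE eqxx form1E => VVkk; rewrite -[RHS]VVkk; apply: eq_bigr => l _.
by rewrite !mxE expr2.
Qed.

Lemma prob_rows_mul_bound n K (Pi : 'M[R]_(n, K)) (b : 'cV[R]_K) lam i :
  0 < lam -> prob_rows Pi -> lambdaK_ge (Pi^T *m Pi) lam ->
  '[(Pi *m b)^T] <= 1 -> `|(Pi *m b) i 0| <= 1 / Num.sqrt lam.
Proof.
move=> lam_gt0 Pi_prob Pi_gram le_norm.
have gram_sym : (Pi^T *m Pi)^T = Pi^T *m Pi by rewrite trmx_mul trmxK.
have b_coord j : `|b j 0| <= 1 / Num.sqrt lam.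
  apply: abs_le_div_sqrt; rewrite ?expr1n //.
  have := coord_sqr_le_form1 b^T j; rewrite mxE => /(ler_wpM2l (ltW lam_gt0)).
  move=> /le_trans; apply; apply: le_trans (lambdaK_ge_form gram_sym Pi_gram b^T) _.
  by rewrite !form_idfunE mulmx1 !trmxK trmx_mul !mulmxA in le_norm *.
have [Pi_ge0 Pi_sum1] := Pi_prob i.
by rewrite mxE; apply: norm_convex_comb_le.
Qed.

Lemma weighted_prob_rows_mul_bound n K (theta : 'rV[R]_n) (Pi : 'M[R]_(n, K))
    (b : 'cV[R]_K) s c i :
  0 < s -> 0 <= c -> (forall l, 0 <= theta 0 l) ->
  (forall l m, theta 0 l <= c * theta 0 m) -> prob_rows Pi ->
  (forall j, s <= #|pure_nodes Pi j|%:R) ->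
  '[(diag_mx theta *m Pi *m b)^T] <= 1 ->
  `|(diag_mx theta *m Pi *m b) i 0| <= c / Num.sqrt s.
Proof.
move=> s_gt0 c_ge0 theta_ge0 theta_ratio Pi_prob pure_large le_norm.
have entryE l : (diag_mx theta *m Pi *m b) l 0 = theta 0 l * (Pi *m b) l 0.
  by rewrite -mulmxA mul_diag_mx mxE.
have pure_entry j l : l \in pure_nodes Pi j -> (Pi *m b) l 0 = b j 0.
  rewrite inE => /eqP Pi_lj; have [Pi_ge0 Pi_sum1] := Pi_prob l.
  by rewrite mxE (convex_comb_vertex Pi_ge0 Pi_sum1 _ Pi_lj).
have coord_bound j : `|theta 0 i * b j 0| <= c / Num.sqrt s.
  apply: abs_le_div_sqrt => //; pose N := pure_nodes Pi j.
  apply: le_trans (ler_wpM2r (sqr_ge0 _) (pure_large j)) _.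
  rewrite mulr_natl -sumr_const.
  apply: le_trans (_ : _ <= c ^+ 2 * \sum_(l in N) (theta 0 l * b j 0) ^+ 2) _.
    rewrite mulr_sumr; apply: ler_sum => l _; rewrite -exprMn mulrA.
    rewrite [X in X <= _]exprMn [X in _ <= X]exprMn ler_wpM2r ?sqr_ge0 //.
    by rewrite ler_sqr ?nnegrE ?mulr_ge0 // theta_ratio.
  rewrite -[X in _ <= X]mulr1 ler_wpM2l ?sqr_ge0 //; apply: le_trans le_norm.
  have -> : \sum_(l in N) (theta 0 l * b j 0) ^+ 2 =
            \sum_(l in N) (diag_mx theta *m Pi *m b)^T 0 l ^+ 2.
    by apply: eq_bigr => l l_pure; rewrite mxE entryE (pure_entry j).
  rewrite form1E [X in _ <= X](bigID (mem N)) /= lerDl.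
  by apply: sumr_ge0 => l _; exact: sqr_ge0.
have [Pi_ge0 Pi_sum1] := Pi_prob i.
rewrite entryE mxE mulr_sumr.
under eq_bigr do rewrite mulrCA.
exact: norm_convex_comb_le.
Qed.

Lemma mm_eigenvector_bound n K theta (Pi : 'M[R]_(n, K)) (P : 'M[R]_K)
    (V : 'M[R]_(n, K)) d lam i k :
  0 < lam -> prob_rows Pi -> lambdaK_ge (Pi^T *m Pi) lam ->
  eig_decomp (mm_mean theta Pi P) V d -> `|V i k| <= 1 / Num.sqrt lam.
Proof.
move=> lam_gt0 Pi_prob Pi_gram eig.
have H_factor : mm_mean theta Pi P = Pi *m (theta *: (P *m Pi^T)).
  by rewrite /mm_mean -scalemxAr mulmxA.
have [b col_V] := eig_decomp_col_factor k eig H_factor.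
have -> : V i k = (Pi *m b) i 0 by rewrite -col_V mxE.
apply: prob_rows_mul_bound => //.
by rewrite -col_V (eig_decomp_col_norm k eig).
Qed.

Lemma dcmm_eigenvector_bound n K (theta : 'rV[R]_n) (Pi : 'M[R]_(n, K))
    (P : 'M[R]_K) (V : 'M[R]_(n, K)) d s c i k :
  0 < s -> 0 <= c -> (forall l, 0 <= theta 0 l) ->
  (forall l m, theta 0 l <= c * theta 0 m) -> prob_rows Pi ->
  (forall j, s <= #|pure_nodes Pi j|%:R) ->
  eig_decomp (dcmm_mean theta Pi P) V d -> `|V i k| <= c / Num.sqrt s.
Proof.
move=> s_gt0 c_ge0 theta_ge0 theta_ratio Pi_prob pure_large eig.
have H_factor : dcmm_mean theta Pi P = diag_mx theta *m Pi *m (P *m Pi^T *m diag_mx theta).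
  by rewrite /dcmm_mean !mulmxA.
have [b col_V] := eig_decomp_col_factor k eig H_factor.
have -> : V i k = (diag_mx theta *m Pi *m b) i 0 by rewrite -col_V mxE.
apply: weighted_prob_rows_mul_bound => //.
by rewrite -col_V (eig_decomp_col_norm k eig).
Qed.

End EigenvectorEntries.

Theorem lemma7 (R : realType) (K : nat) :
  (* Mixed membership model with (C1) and (C2) *)
  (forall (n0 : nat) (theta : nat -> R) (Pi : forall n : nat, 'M[R]_(n, K))
          (P : nat -> 'M[R]_K) (zdiag : nat -> bool)
          (V : forall n : nat, 'M[R]_(n, K)) (d : nat -> 'rV[R]_K)
          (c0 c0' c1 : R),
      (forall n, (n0 <= n)%N ->
         [/\ prob_rows (Pi n), mean_ok (mm_mean (theta n) (Pi n) (P n)) (P n)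
           & eig_decomp (mm_mean (theta n) (Pi n) (P n)) (V n) (d n)]) ->
      cond_C1 c0 n0 d (fun n => alpha (mm_mean (theta n) (Pi n) (P n)) (zdiag n)) ->
      (* (C2) *)
      0 < c0' < 1 -> 0 < c1 < 1 ->
      (forall n, (n0 <= n)%N ->
         [/\ lambdaK_ge ((Pi n)^T *m Pi n) (c0' * n%:R),
             lambdaK_ge (P n) c0'
           & (n%:R) `^ (- c1) <= theta n]) ->
      exists C : R, 0 < C /\ exists N : nat, forall n, (N <= n)%N ->
        forall (i : 'I_n) (k : 'I_K), `|V n i k| <= C / Num.sqrt (n%:R))
  /\
  (* Degree-corrected mixed membership model with (C1) and (C4) *)
  (forall (n0 : nat) (theta : forall n : nat, 'rV[R]_n)
          (Pi : forall n : nat, 'M[R]_(n, K))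
          (P : nat -> 'M[R]_K) (zdiag : nat -> bool)
          (V : forall n : nat, 'M[R]_(n, K)) (d : nat -> 'rV[R]_K)
          (c0 c2 c3 c4 : R),
      (forall n, (n0 <= n)%N ->
         [/\ (forall l : 'I_n, 0 < theta n 0 l), prob_rows (Pi n),
             mean_ok (dcmm_mean (theta n) (Pi n) (P n)) (P n)
           & eig_decomp (dcmm_mean (theta n) (Pi n) (P n)) (V n) (d n)]) ->
      cond_C1 c0 n0 d (fun n => alpha (dcmm_mean (theta n) (Pi n) (P n)) (zdiag n)) ->
      (* (C4) *)
      0 < c2 < 1 -> 0 < c3 < 1 -> 0 < c4 ->
      (forall n, (n0 <= n)%N ->
         [/\ (forall k : 'I_K, c2 * n%:R <= (#|pure_nodes (Pi n) k|)%:R),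
             (forall l m : 'I_n, theta n 0 l <= c4 * theta n 0 m)
           & (forall l : 'I_n, (n%:R) `^ (- c3) <= theta n 0 l ^+ 2)]) ->
      exists C : R, 0 < C /\ exists N : nat, forall n, (N <= n)%N ->
        forall (i : 'I_n) (k : 'I_K), `|V n i k| <= C / Num.sqrt (n%:R)).
Proof.
split.
- move=> n0 theta Pi P zdiag V d c0 c0' c1 model _ /andP[c0'_gt0 _] _ C2.
  exists (1 / Num.sqrt c0'); split; first by rewrite divr_gt0 ?sqrtr_gt0.
  exists n0 => n n_ge i k.
  have n_gt0 : 0 < n%:R :> R by rewrite ltr0n (leq_ltn_trans (leq0n i)).
  have [Pi_prob _ eig] := model n n_ge; have [Pi_gram _ _] := C2 n n_ge.
  rewrite -div_sqrtM; last exact: ltW.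
  exact: mm_eigenvector_bound (mulr_gt0 c0'_gt0 n_gt0) Pi_prob Pi_gram eig.
- move=> n0 theta Pi P zdiag V d c0 c2 c3 c4 model _ /andP[c2_gt0 _] _ c4_gt0 C4.
  exists (c4 / Num.sqrt c2); split; first by rewrite divr_gt0 ?sqrtr_gt0.
  exists n0 => n n_ge i k.
  have n_gt0 : 0 < n%:R :> R by rewrite ltr0n (leq_ltn_trans (leq0n i)).
  have [theta_gt0 Pi_prob _ eig] := model n n_ge; have [pure_large theta_ratio _] := C4 n n_ge.
  rewrite -div_sqrtM; last exact: ltW.
  apply: dcmm_eigenvector_bound (mulr_gt0 c2_gt0 n_gt0) (ltW c4_gt0) _ theta_ratio Pi_prob
    pure_large eig => l.
  exact: ltW.
Qed.
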